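(* Let $m\ge1$, $n\ge1$, fix $t_0\in\mathbb{Z}^m$ and let $\mathcal{Z}=\{t\in\mathbb{Z}^m\mid t\ge t_0\}$. Let $T=(T_1,\dots,T_m)\in\mathbb{N}^m$, $T\ne0$. Let $A_\alpha\colon\mathcal{Z}\to\mathcal{M}_n(\mathbb{C})$, $\alpha\in\{1,\dots,m\}$, satisfy $$A_\alpha(t+1_\beta)A_\beta(t)=A_\beta(t+1_\alpha)A_\alpha(t),\quad \forall t\in\mathcal{Z},\ \forall\alpha,\beta,$$ and suppose that for all $\alpha,\beta$ and all $t\in\mathcal{Z}$, $A_\alpha(t+T_\beta\cdot1_\beta)=A_\alpha(t)$ and $A_\alpha(t)$ is invertible. Let $\Phi(t)=\chi(t,t_0)$, $t\in\mathcal{Z}$. Assume one of: (i) $n=2$; or (ii) for all $\alpha$ and all $t\in\mathcal{Z}$ the matrix $A_\alpha(t)$ is Hermitian, and $A_\alpha(t)A_\alpha(t+k\cdot1_\alpha)=A_\alpha(t+k\cdot1_\alpha)A_\alpha(t)$ for all $t\in\mathcal{Z}$, $k\in\mathbb{N}$, $\alpha\in\{1,\dots,m\}$. Then there exist a function $P\colon\mathcal{Z}\to\mathcal{M}_n(\mathbb{C})$ and constant invertible matrices $B_1,\dots,B_m\in\mathcal{M}_n(\mathbb{C})$ such that (a) $P(t+T_\alpha\cdot1_\alpha)=P(t)$ for all $t\in\mathcal{Z}$ and all $\alpha$; (b) $B_\alpha B_\beta=B_\beta B_\alpha$ for all $\alpha,\beta$; (c) $\Phi(t)=P(t)B_1^{t^1}B_2^{t^2}\cdots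 B_m^{t^m}$ for all $t\ge t_0$.
   Context: $\mathbb{N}=\{0,1,2,\dots\}$; $1_\alpha\in\mathbb{Z}^m$ has $1$ in position $\alpha$ and $0$ elsewhere; $s\le t$ in $\mathbb{Z}^m$ means $s^\alpha\le t^\alpha$ for all $\alpha$; $t=(t^1,\dots,t^m)$. Under the compatibility relations, for each $s\in\mathcal{Z}$ there is a unique $\chi(\cdot,s)\colon\{t\in\mathcal{Z}\mid t\ge s\}\to\mathcal{M}_n(\mathbb{C})$ with $\chi(s,s)=I_n$ and $\chi(t+1_\alpha,s)=A_\alpha(t)\chi(t,s)$ for all $t\ge s$ and all $\alpha$ (the transition matrix). Negative integer powers of invertible matrices are powers of the inverse. *)

From HB Require Import structures.
From mathcomp Require Import all_boot all_order all_algebra.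
From mathcomp Require Import complex.
From mathcomp Require Import Rstruct.
Set Implicit Arguments. Unset Strict Implicit. Unset Printing Implicit Defensive.
Import Order.TTheory GRing.Theory Num.Theory.
Local Open Scope ring_scope.

Definition C : Type := complex Rdefinitions.R.

Definition zvec (m : nat) := 'I_m -> int.

Definition zle m (s t : zvec m) : Prop := forall i, s i <= t i.

Definition zadd m (t s : zvec m) : zvec m := fun i => t i + s i.

Definition zunit m (k : int) (a : 'I_m) : zvec m :=
  fun i => if i == a then k else 0.

Definition mxpowz n (B : 'M[C]_n) (z : int) : 'M[C]_n :=
  match z with
  | Posz k => B ^+ k
  | Negz k => (invmx B) ^+ k.+1
  end.

Definition hermitian_mx n (A : 'M[C]_n) : Prop :=
  forall i j, A i j = (A j i)^*.

From HB Require Import structures.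
From mathcomp Require Import all_boot all_order all_algebra complex Rstruct.
From mathcomp Require Import ring.
From Stdlib Require Import FunctionalExtensionality.
Set Implicit Arguments. Unset Strict Implicit. Unset Printing Implicit Defensive.
Import Order.TTheory GRing.Theory Num.Theory.
Local Open Scope ring_scope.

(* Periodicity of the A_a turns the recursion for Phi into the Floquet relation
   Phi (t + T_a 1_a) = Phi t * M_a, with monodromy M_a := Phi (t0 + T_a 1_a);
   the M_a commute, both products being Phi (t0 + T_a 1_a + T_b 1_b).  Over C
   every invertible matrix M has a k-th root that is a polynomial in M: lift a
   k-th root of 'X modulo the characteristic polynomial, whose roots are nonzero,
   root by root (Hensel/Newton), and apply Cayley-Hamilton.  Roots B_a of the
   commuting M_a that are polynomials in them commute, and
   P t := Phi t * (prod_a B_a ^ t^a)^-1 is periodic. *)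

Lemma exprD_mod_sqr (R : comNzRingType) (q d : R) (k : nat) :
  exists w, (q + d) ^+ k.+1 = q ^+ k.+1 + k.+1%:R * q ^+ k * d + d ^+ 2 * w.
Proof.
elim: k => [|k [w IH]]; first by exists 0; rewrite expr1 expr0 mulr1 mul1r mulr0 addr0.
exists (q * w + k.+1%:R * q ^+ k + d * w).
by rewrite exprS IH (mulrS 1 k.+1) !exprS; ring.
Qed.

Lemma root_newton_step (F : numClosedFieldType) (k : nat) (mu a b r : F) :
  mu != 0 -> (b = 0 -> a ^+ k.+1 = mu) ->
  exists c, if b == 0 then r + k.+1%:R * a ^+ k * c = 0 else (a + c * b) ^+ k.+1 = mu.
Proof.
move=> mu0; have [-> /(_ erefl) a_root|b0 _] := eqVneq b 0; last first.
  exists ((k.+1.-root mu - a) / b); rewrite divfK // addrC subrK.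
  exact: rootCK.
have ka0 : k.+1%:R * a ^+ k != 0.
  rewrite mulf_neq0 ?pnatr_eq0 // expf_neq0 //.
  by apply: contra mu0 => /eqP a0; rewrite -a_root a0 expr0n.
by exists (- r / (k.+1%:R * a ^+ k)); rewrite mulrC divfK // addrN.
Qed.

Lemma dvdp_root_lift (F : numClosedFieldType) (k : nat) (mu : F) (p q : {poly F}) :
  mu != 0 -> p %| q ^+ k.+1 - 'X ->
  exists q', ('X - mu%:P) * p %| q' ^+ k.+1 - 'X.
Proof.
move=> mu0 /dvdpP [r Hr].
have q_root : p.[mu] = 0 -> q.[mu] ^+ k.+1 = mu.
  move=> p_mu; apply/eqP; rewrite -subr_eq0.
  by have := congr1 (horner^~ mu) Hr; rewrite /= !hornerE p_mu mulr0 => ->.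
have [c Hc] := root_newton_step r.[mu] mu0 q_root.
have [w Hw] := exprD_mod_sqr q (c%:P * p) k.
pose g := r + k.+1%:R * q ^+ k * c%:P + c%:P ^+ 2 * p * w.
have Eg : (q + c%:P * p) ^+ k.+1 - 'X = g * p.
  by rewrite Hw /g -[q ^+ k.+1](subrK 'X) Hr; ring.
exists (q + c%:P * p); rewrite Eg dvdp_mul // dvdp_XsubCl; apply/rootP.
move: Hc; have [p_mu|p_mu] := eqVneq p.[mu] 0 => Hc.
  by rewrite /g !(hornerE, hornerMn) p_mu mulr0 mul0r addr0.
have := congr1 (horner^~ mu) Eg; rewrite /= !hornerE Hc subrr => /esym/eqP.
by rewrite mulf_eq0 (negbTE p_mu) orbF => /eqP.
Qed.

Lemma dvdp_prod_XsubC_root (F : numClosedFieldType) (k : nat) (s : seq F) :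
  0 \notin s -> exists q : {poly F}, \prod_(x <- s) ('X - x%:P) %| q ^+ k.+1 - 'X.
Proof.
elim: s => [|mu s IH]; first by exists 0; rewrite big_nil dvd1p.
rewrite in_cons negb_or eq_sym => /andP [mu0 /IH [q dvd_q]].
by rewrite big_cons; exact: dvdp_root_lift dvd_q.
Qed.

Lemma mx_root_horner (n : nat) (M : 'M[C]_n.+1) (k : nat) :
  M \in unitmx -> exists q : {poly C}, horner_mx M q ^+ k.+1 = M.
Proof.
move=> uM; have [s Hs] := closed_field_poly_normal (char_poly M).
rewrite (monicP (char_poly_monic M)) scale1r in Hs.
have s_nz : 0 \notin s.
  apply/negP => s0; have : eigenvalue M 0 by rewrite eigenvalue_root_char Hs root_prod_XsubC.
  case/eigenvalueP => v; rewrite scale0r => v0; apply/negP; rewrite negbK.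
  by rewrite -[v](mulmxK uM) v0 mul0mx.
have [q /dvdpP [r Hr]] := dvdp_prod_XsubC_root k s_nz.
exists q; apply/eqP; rewrite -subr_eq0 -rmorphXn -[X in _ - X]horner_mx_X -rmorphB /=.
by rewrite Hr -Hs rmorphM /= Cayley_Hamilton mulr0.
Qed.

Lemma commuting_mx_roots (I : finType) (n : nat) (M : I -> 'M[C]_n.+1) (k : I -> nat) :
    (forall i, M i \in unitmx) -> (forall i j, M i *m M j = M j *m M i) ->
    (forall i, k i = 0%N -> M i = 1%:M) ->
  exists B : I -> 'M[C]_n.+1, [/\ forall i, B i \in unitmx,
    forall i, B i ^+ k i = M i & forall i j, B i *m B j = B j *m B i].
Proof.
move=> M_unit M_comm M_eq1.
have root i : exists q, horner_mx (M i) q ^+ k i = M i /\ horner_mx (M i) q \in unitmx.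
  case k_i: (k i) => [|k'].
    by exists 1; rewrite rmorph1 expr0 unitr1 M_eq1.
  have [q q_root] := mx_root_horner k' (M_unit i).
  by exists q; rewrite -(unitrX_pos _ (ltn0Sn k')) q_root M_unit.
have [q Hq] := fin_all_exists root.
exists (fun i => horner_mx (M i) (q i)); split=> [i|i|i j]; try by case: (Hq i).
by apply: comm_horner_mx; apply: comm_mx_horner; exact: M_comm.
Qed.

Section LatticeVectors.
Variable m : nat.
Implicit Types (t x y : zvec m) (b : 'I_m) (k l : int).

Lemma zaddAC t x y : zadd (zadd t x) y = zadd (zadd t y) x.
Proof. by apply: functional_extensionality => i; rewrite /zadd addrAC. Qed.

Lemma zadd_zunitD t k l b : zadd (zadd t (zunit k b)) (zunit l b) = zadd t (zunit (k + l) b).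
Proof.
apply: functional_extensionality => i; rewrite /zadd /zunit.
by case: eqP; rewrite ?addrA ?addr0.
Qed.

Lemma zadd_zunit0 t b : zadd t (zunit 0 b) = t.
Proof. by apply: functional_extensionality => i; rewrite /zadd /zunit; case: eqP; rewrite addr0. Qed.

Lemma zle_zadd_zunit (t0 : zvec m) t k b : 0 <= k -> zle t0 t -> zle t0 (zadd t (zunit k b)).
Proof.
move=> k_ge0 le_t i; rewrite /zadd /zunit; case: eqP => _; last by rewrite addr0.
by rewrite (le_trans (le_t i)) // lerDl.
Qed.

Lemma sum_zunit k b : \sum_i zunit k b i = k.
Proof.
rewrite (bigD1 b) //= big1 ?addr0; first by rewrite /zunit eqxx.
by move=> i /negbTE ib; rewrite /zunit ib.
Qed.

(* By induction on [\sum_i (t i - t0 i)]: every [t > t0] is a unit step above some point [>= t0]. *)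
Lemma zle_ind (t0 : zvec m) (P : zvec m -> Prop) :
    P t0 -> (forall t b, zle t0 t -> P t -> P (zadd t (zunit 1 b))) ->
  forall t, zle t0 t -> P t.
Proof.
move=> P0 PS.
suff P_dist N t : zle t0 t -> \sum_i (t i - t0 i) = N%:Z -> P t.
  move=> t le_t; apply: (P_dist _ t le_t (esym (gez0_abs _))).
  by rewrite sumr_ge0 // => i _; rewrite subr_ge0.
elim: N t => [|N IH] t le_t dist_t.
  suff -> : t = t0 by [].
  apply: functional_extensionality => i; apply/eqP; rewrite -subr_eq0; apply/eqP.
  by apply: (psumr_eq0P _ dist_t) => // j _; rewrite subr_ge0.
have [b t_b|t_eq] := pickP (fun b => t0 b < t b); last first.
  move: dist_t; rewrite big1 // => i _; apply/eqP; rewrite subr_eq0 eq_le le_t.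
  by rewrite leNgt t_eq.
pose t' := zadd t (zunit (-1) b).
have le_t' : zle t0 t'.
  move=> i; rewrite /t' /zadd /zunit; case: eqP => [->|_]; last by rewrite addr0.
  by rewrite -ltzD1 subrK.
have -> : t = zadd t' (zunit 1 b) by rewrite zadd_zunitD addNr zadd_zunit0.
apply: PS => //; apply: IH => //.
have -> : \sum_i (t' i - t0 i) = \sum_i (t i - t0 i) + \sum_i zunit (-1) b i.
  by rewrite -big_split /=; apply: eq_bigr => i _; rewrite /t' /zadd addrAC.
by rewrite dist_t sum_zunit -addn1 PoszD addrK.
Qed.

End LatticeVectors.

Lemma prodr_mul_eq_if (R : pzRingType) (I : eqType) (s : seq I) (F : I -> R) (a : I) (c : R) :
    (forall i, GRing.comm c (F i)) ->
  \prod_(i <- s) (F i * (if i == a then c else 1)) = (\prod_(i <- s) F i) * c ^+ count_mem a s.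
Proof.
move=> c_comm; elim: s => [|x s IH]; first by rewrite !big_nil mul1r.
rewrite !big_cons IH /= exprD -!mulrA; congr (_ * _).
have -> : (if x == a then c else 1) = c ^+ (x == a) by case: (x == a).
have c_prod : GRing.comm c (\prod_(i <- s) F i) by apply: commr_prod => i _.
by rewrite mulrA (commr_sym (commrX _ (commr_sym c_prod))) -mulrA.
Qed.

Lemma mxpowzE (n : nat) (B : 'M[C]_n.+1) (z : int) : mxpowz B z = B ^ z.
Proof. by case: z => k //=; rewrite exprVn. Qed.

Section MatrixPowersOnLattice.
Variables (m n : nat) (B : 'I_m -> 'M[C]_n.+1).
Hypothesis B_unit : forall a, B a \is a GRing.unit.
Hypothesis B_comm : forall a b, GRing.comm (B a) (B b).

Definition mxpowz_prod (t : zvec m) := \prod_(a < m) mxpowz (B a) (t a).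

Lemma mxpowz_prod_unit t : mxpowz_prod t \is a GRing.unit.
Proof. by apply: rpred_prod => a _; rewrite mxpowzE unitrXz. Qed.

Lemma mxpowz_prod_zunit t (k : int) a :
  mxpowz_prod (zadd t (zunit k a)) = mxpowz_prod t * B a ^ k.
Proof.
transitivity (\prod_(i < m) (mxpowz (B i) (t i) * (if i == a then B a ^ k else 1))).
  apply: eq_bigr => i _; rewrite !mxpowzE /zadd /zunit.
  by case: eqP => [->|_]; rewrite ?addr0 ?mulr1 ?exprzDr.
rewrite prodr_mul_eq_if => [|i]; last first.
  by rewrite mxpowzE; apply/commrXz/commr_sym/commrXz/commr_sym.
by rewrite count_uniq_mem ?index_enum_uniq // mem_index_enum expr1.
Qed.

End MatrixPowersOnLattice.

Section Monodromy.
Variables (m n : nat) (t0 : zvec m) (T : 'I_m -> nat).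
Variables (A : 'I_m -> zvec m -> 'M[C]_n) (Phi : zvec m -> 'M[C]_n).
Hypothesis A_period : forall t, zle t0 t -> forall a b : 'I_m,
  A a (zadd t (zunit (T b)%:Z b)) = A a t.
Hypothesis A_unit : forall t, zle t0 t -> forall a, A a t \in unitmx.
Hypothesis Phi_t0 : Phi t0 = 1%:M.
Hypothesis Phi_step : forall t, zle t0 t -> forall a,
  Phi (zadd t (zunit 1 a)) = A a t *m Phi t.

Definition monodromy (a : 'I_m) := Phi (zadd t0 (zunit (T a)%:Z a)).

Lemma Phi_zunit_period a t :
  zle t0 t -> Phi (zadd t (zunit (T a)%:Z a)) = Phi t *m monodromy a.
Proof.
move: t; apply: zle_ind => [|t b le_t IH]; first by rewrite Phi_t0 mul1mx.
have le_tT : zle t0 (zadd t (zunit (T a)%:Z a)) by exact: zle_zadd_zunit.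
by rewrite zaddAC Phi_step // A_period // IH Phi_step // mulmxA.
Qed.

Lemma Phi_unit t : zle t0 t -> Phi t \in unitmx.
Proof.
move: t; apply: zle_ind => [|t b le_t IH]; first by rewrite Phi_t0 unitmx1.
by rewrite Phi_step // unitmx_mul A_unit.
Qed.

Lemma monodromy_unit a : monodromy a \in unitmx.
Proof. by apply: Phi_unit; apply: zle_zadd_zunit. Qed.

Lemma monodromy_comm a b : monodromy a *m monodromy b = monodromy b *m monodromy a.
Proof.
rewrite -!Phi_zunit_period; first by rewrite zaddAC.
all: exact: zle_zadd_zunit.
Qed.

Lemma monodromy_period0 a : T a = 0%N -> monodromy a = 1%:M.
Proof. by rewrite /monodromy => ->; rewrite zadd_zunit0. Qed.

End Monodromy.

Theorem theorem2p11 (m n : nat) (t0 : zvec m) (T : 'I_m -> nat)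
    (A : 'I_m -> zvec m -> 'M[C]_n) (Phi : zvec m -> 'M[C]_n) :
  (0 < m)%N -> (0 < n)%N ->
  (exists b, T b != 0%N) ->
  (* compatibility relations on Z = {t >= t0} *)
  (forall t, zle t0 t -> forall a b : 'I_m,
     A a (zadd t (zunit 1 b)) *m A b t = A b (zadd t (zunit 1 a)) *m A a t) ->
  (* periodicity *)
  (forall t, zle t0 t -> forall a b : 'I_m,
     A a (zadd t (zunit (T b)%:Z b)) = A a t) ->
  (* invertibility *)
  (forall t, zle t0 t -> forall a, A a t \in unitmx) ->
  (* Phi = chi(., t0): Phi(t0) = I, Phi(t + 1_a) = A_a(t) Phi(t) for t >= t0 *)
  Phi t0 = 1%:M ->
  (forall t, zle t0 t -> forall a,
     Phi (zadd t (zunit 1 a)) = A a t *m Phi t) ->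
  (* (i) or (ii) *)
  (n = 2%N \/
   ((forall (a : 'I_m) (t : zvec m), zle t0 t -> hermitian_mx (A a t)) /\
    (forall (a : 'I_m) (t : zvec m) (k : nat), zle t0 t ->
       A a t *m A a (zadd t (zunit k%:Z a)) = A a (zadd t (zunit k%:Z a)) *m A a t))) ->
  exists (P : zvec m -> 'M[C]_n) (B : 'I_m -> 'M[C]_n),
    (forall a, B a \in unitmx) /\
    (forall t, zle t0 t -> forall a, P (zadd t (zunit (T a)%:Z a)) = P t) /\
    (forall a b, B a *m B b = B b *m B a) /\
    (forall t, zle t0 t -> Phi t = P t *m \prod_(a < m) mxpowz (B a) (t a)).
Proof.
move=> _ n_gt0 _ _ A_period A_unit Phi_t0 Phi_step _.
case: n n_gt0 A Phi A_period A_unit Phi_t0 Phi_step => [//|n] _ A Phi.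
move=> A_period A_unit Phi_t0 Phi_step.
have [B [B_unit B_pow B_comm]] := commuting_mx_roots
  (monodromy_unit T A_unit Phi_t0 Phi_step)
  (monodromy_comm A_period Phi_t0 Phi_step) (monodromy_period0 Phi_t0).
have B_commr a b : GRing.comm (B a) (B b) by rewrite /GRing.comm -!mulmxE.
have B_prod_unit t : mxpowz_prod B t \is a GRing.unit by exact: mxpowz_prod_unit.
exists (fun t => Phi t * (mxpowz_prod B t)^-1), B; split=> //; split; last split=> //.
- move=> t le_t a; rewrite (Phi_zunit_period A_period Phi_t0 Phi_step) //.
  rewrite (mxpowz_prod_zunit B_unit B_commr) -[B a ^ _]/(B a ^+ T a) B_pow mulmxE.
  by rewrite invrM ?mulrA ?mulrK // -B_pow unitrX.
- by move=> t _; rewrite mulmxE -/(mxpowz_prod B t) mulrVK.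
Qed.
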